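(* For positive integers $c,r$ define the graphs $Z_{c,r}$ and $Y_{c,r}$ as follows. $Z_{c,r}$ has vertex set $\{z_{i,j}:1\le i\le c,\ 1\le j\le r\}$, and for $i<i'$, $z_{i,j}z_{i',j'}$ is an edge iff (1) $i$ is odd, $i'=i+1$ and $j>j'$; or (2) $i$ is even, $i'=i+1$ and $j\le j'$; or (3) $i$ is even, $i'$ is odd and $i'\ge i+3$. $Y_{c,r}$ has vertex set $\{y_{i,j}:1\le i\le c,\ 1\le j\le r\}$, and $y_{i,j}y_{i',j'}$ is an edge iff (1) $i$ is odd, $i'=i+1$ and $j\ge j'$; or (2) $i$ is even, $i'=i+1$ and $j<j'$; or (3) $i$ is even, $i'$ is odd and $i'\ge i+3$; or (4) $i$ is odd, $i'=i-1$ and $j=1$. Then for every $n\ge1$: $Z_{2n,2n}$ contains $Y_{n,n}$ as an induced subgraph; $Y_{2n,2n}$ contains $Z_{n,n}$ as an induced subgraph; and moreover $Z_{n,n}$ can be embedded as an induced subgraph in $Y_{2n,2n}$ using none of the vertices $y_{i,1}$ ($1\le i\le 2n$) of the bottom row.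
   Context: In these grids, $i$ indexes columns (left to right) and $j$ indexes rows, row $1$ being the bottom row. *)

From mathcomp Require Import all_boot.
Set Implicit Arguments. Unset Strict Implicit. Unset Printing Implicit Defensive.

(* Vertices of Z_{c,r} / Y_{c,r}: pairs (i, j) : 'I_c * 'I_r, standing for
   z_{i+1, j+1} (resp. y_{i+1, j+1}); i = column, j = row (row 1 = bottom). *)

Definition Zcond (i j i' j' : nat) : bool :=
  [|| [&& odd i, i' == i.+1 & j' < j],
      [&& ~~ odd i, i' == i.+1 & j <= j'] |
      [&& ~~ odd i, odd i' & i + 3 <= i'] ].

Definition Ycond (i j i' j' : nat) : bool :=
  [|| [&& odd i, i' == i.+1 & j' <= j],
      [&& ~~ odd i, i' == i.+1 & j < j'],
      [&& ~~ odd i, odd i' & i + 3 <= i'] |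
      [&& odd i, i'.+1 == i & j == 1] ].

Definition Zadj (c r : nat) (u v : 'I_c * 'I_r) : bool :=
  Zcond u.1.+1 u.2.+1 v.1.+1 v.2.+1 || Zcond v.1.+1 v.2.+1 u.1.+1 u.2.+1.

Definition Yadj (c r : nat) (u v : 'I_c * 'I_r) : bool :=
  Ycond u.1.+1 u.2.+1 v.1.+1 v.2.+1 || Ycond v.1.+1 v.2.+1 u.1.+1 u.2.+1.

Definition induced_embedding (V W : Type) (eH : V -> V -> bool)
    (eG : W -> W -> bool) (f : V -> W) : Prop :=
  injective f /\ forall u v, eH u v = eG (f u) (f v).

(* Both embeddings are shears: moving row j of column i to row j + n - i (or
   j + i) shifts neighbouring columns by one row against each other, which
   turns the comparisons j >= j' and j < j' of Y into j > j' and j <= j' of Z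
   and vice versa.  In the Z-into-Y direction the shear lifts everything off
   the bottom row, so the extra edges (4) of Y never occur.  In the Y-into-Z
   direction the bottom row of Y, whose odd vertices y_{i,1} see the whole
   column i-1, is relocated: y_{i,1} goes to z_{i+2,1}, which sees every even
   column left of it through rule (3), and y_{1,1} goes to z_{1,2}.
   The maps below act on 0-based coordinates. *)
From mathcomp Require Import all_boot zify.

Set Implicit Arguments. Unset Strict Implicit. Unset Printing Implicit Defensive.

Definition grid_adj (cond : nat -> nat -> nat -> nat -> bool) (u v : nat * nat) :=
  cond u.1.+1 u.2.+1 v.1.+1 v.2.+1 || cond v.1.+1 v.2.+1 u.1.+1 u.2.+1.

Definition ord_pair c r (u : 'I_c * 'I_r) : nat * nat :=
  (nat_of_ord u.1, nat_of_ord u.2).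

Lemma ord_pair_inj c r : injective (@ord_pair c r).
Proof. by move=> [i j] [i' j'] [/val_inj-> /val_inj->]. Qed.

Section GridEmbedding.

Variables (c r c' r' : nat) (condH condG : nat -> nat -> nat -> nat -> bool).
Variable g : nat * nat -> nat * nat.
Hypothesis g_col : forall a b, a < c -> b < r -> (g (a, b)).1 < c'.
Hypothesis g_row : forall a b, a < c -> b < r -> (g (a, b)).2 < r'.
Hypothesis g_inj : forall a b a' b', a < c -> b < r -> a' < c -> b' < r ->
  g (a, b) = g (a', b') -> (a, b) = (a', b').
Hypothesis g_adj : forall a b a' b', a < c -> b < r -> a' < c -> b' < r ->
  grid_adj condH (a, b) (a', b') = grid_adj condG (g (a, b)) (g (a', b')).

Definition grid_map (u : 'I_c * 'I_r) : 'I_c' * 'I_r' :=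
  (Ordinal (g_col (ltn_ord u.1) (ltn_ord u.2)),
   Ordinal (g_row (ltn_ord u.1) (ltn_ord u.2))).

Lemma ord_pair_grid_map u : ord_pair (grid_map u) = g (ord_pair u).
Proof. by rewrite /ord_pair /=; case: (g _). Qed.

Lemma grid_map_induced :
  induced_embedding (fun u v => grid_adj condH (ord_pair u) (ord_pair v))
                    (fun u v => grid_adj condG (ord_pair u) (ord_pair v)) grid_map.
Proof.
split=> [u v /(congr1 (@ord_pair _ _))|[i j] [i' j']].
  rewrite !ord_pair_grid_map => /g_inj; case: u v => [i j] [i' j'].
  by move=> /(_ (ltn_ord _) (ltn_ord _) (ltn_ord _) (ltn_ord _)) /ord_pair_inj.
by rewrite !ord_pair_grid_map; apply: g_adj.
Qed.

End GridEmbedding.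

Definition Z_to_Y (u : nat * nat) : nat * nat := (u.1, u.1 + u.2 + 1).

Lemma Z_to_Y_adj u v : grid_adj Zcond u v = grid_adj Ycond (Z_to_Y u) (Z_to_Y v).
Proof.
case: u v => [a b] [a' b']; rewrite /grid_adj /Zcond /Ycond /=.
by case: (odd a); case: (odd a'); apply/idP/idP; lia.
Qed.

Lemma Z_to_Y_bound n a b : a < n -> b < n ->
  (Z_to_Y (a, b)).1 < 2 * n /\ (Z_to_Y (a, b)).2 < 2 * n.
Proof. by rewrite /=; lia. Qed.

Lemma Z_to_Y_inj a b a' b' : Z_to_Y (a, b) = Z_to_Y (a', b') -> (a, b) = (a', b').
Proof. by move=> [<-] /eqP; rewrite !eqn_add2r eqn_add2l => /eqP->. Qed.

Definition Y_to_Z n (u : nat * nat) : nat * nat :=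
  let: (a, b) := u in
  if 0 < b then (a, b + n - a - 1)
  else if odd a then (a, 0)
  else if a == 0 then (0, 1)
  else (a + 2, 0).

Lemma Y_to_Z_bound n a b : a < n -> b < n ->
  (Y_to_Z n (a, b)).1 < 2 * n /\ (Y_to_Z n (a, b)).2 < 2 * n.
Proof.
rewrite /Y_to_Z /= => Ha Hb.
case: (posnP b) => [b0|?]; case: (boolP (odd a)) => oa; case: (eqVneq a 0) => a0;
subst; rewrite /= ?oa //=; lia.
Qed.

Lemma Y_to_Z_inj n a b a' b' : a < n -> b < n -> a' < n -> b' < n ->
  Y_to_Z n (a, b) = Y_to_Z n (a', b') -> (a, b) = (a', b').
Proof.
rewrite /Y_to_Z /= => Ha Hb Ha' Hb'.
case: (posnP b) => [b0|?]; case: (posnP b') => [b0'|?];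
case: (boolP (odd a)) => oa; case: (boolP (odd a')) => oa';
case: (eqVneq a 0) => a0; case: (eqVneq a' 0) => a0'; move=> /pair_equal_spec[E1 E2];
subst; rewrite ?oa ?oa' //= in oa oa' *; congr pair; lia.
Qed.

Lemma Y_to_Z_adj n a b a' b' : a < n -> b < n -> a' < n -> b' < n ->
  grid_adj Ycond (a, b) (a', b') = grid_adj Zcond (Y_to_Z n (a, b)) (Y_to_Z n (a', b')).
Proof.
rewrite /Y_to_Z /grid_adj /= => Ha Hb Ha' Hb'.
case: (posnP b) => [b0|?]; case: (posnP b') => [b0'|?];
case: (boolP (odd a)) => oa; case: (boolP (odd a')) => oa';
case: (eqVneq a 0) => a0; case: (eqVneq a' 0) => a0'; subst;
rewrite /Ycond /Zcond /= ?addn2 /= ?oa ?oa' //=; apply/idP/idP; lia.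
Qed.

Lemma Z_embeds_in_Y_off_bottom n :
  exists f : 'I_n * 'I_n -> 'I_(2 * n) * 'I_(2 * n),
    induced_embedding (@Zadj n n) (@Yadj (2 * n) (2 * n)) f /\
    forall u, nat_of_ord (f u).2 != 0.
Proof.
have col a b (Ha : a < n) (Hb : b < n) := proj1 (Z_to_Y_bound Ha Hb).
have row a b (Ha : a < n) (Hb : b < n) := proj2 (Z_to_Y_bound Ha Hb).
exists (grid_map col row); split=> [|u /=]; last by rewrite addn1.
exact: grid_map_induced (fun a b a' b' _ _ _ _ => @Z_to_Y_inj a b a' b')
                        (fun a b a' b' _ _ _ _ => Z_to_Y_adj (a, b) (a', b')).
Qed.

Lemma Y_embeds_in_Z n :
  exists f : 'I_n * 'I_n -> 'I_(2 * n) * 'I_(2 * n),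
    induced_embedding (@Yadj n n) (@Zadj (2 * n) (2 * n)) f.
Proof.
have col a b (Ha : a < n) (Hb : b < n) := proj1 (Y_to_Z_bound Ha Hb).
have row a b (Ha : a < n) (Hb : b < n) := proj2 (Y_to_Z_bound Ha Hb).
by exists (grid_map col row); apply: grid_map_induced (@Y_to_Z_inj n) (@Y_to_Z_adj n).
Qed.

Theorem lemma10 (n : nat) : 0 < n ->
  (exists f : 'I_n * 'I_n -> 'I_(2 * n) * 'I_(2 * n),
      induced_embedding (@Yadj n n) (@Zadj (2 * n) (2 * n)) f) /\
  (exists f : 'I_n * 'I_n -> 'I_(2 * n) * 'I_(2 * n),
      induced_embedding (@Zadj n n) (@Yadj (2 * n) (2 * n)) f) /\
  (exists f : 'I_n * 'I_n -> 'I_(2 * n) * 'I_(2 * n),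
      induced_embedding (@Zadj n n) (@Yadj (2 * n) (2 * n)) f /\
      forall u, nat_of_ord (f u).2 != 0).
Proof.
move=> _; have [f [f_induced f_off_bottom]] := Z_embeds_in_Y_off_bottom n.
split; first exact: Y_embeds_in_Z.
by split; exists f.
Qed.
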